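(* Let $T$ be the regular rooted tree of valence $p\geq 2$ with the embedded wire diffeology $\mathcal{D}_T$, and equip $\operatorname{Aut}T$ with the functional diffeology. Then every plot $P:\mathbb{R}\to\operatorname{Aut}T$ of this diffeology is a constant map.
   Context: Fix a finite alphabet $A$ with $|A|=p\geq 2$. The vertices of $T$ are the finite words over $A$ (the root is the empty word); two vertices are joined by an edge iff they have the form $a_1\dots a_n$ and $a_1\dots a_na_{n+1}$. As a topological space, $T$ is the 1-dimensional CW complex obtained by realizing each edge as a copy of $[0,1]$, with its usual topology. $\operatorname{Aut}T$ is the group of bijections of the vertex set fixing the root and preserving adjacency; each is regarded as a homeomorphism of the geometric realization mapping each edge affinely onto its image edge. A diffeology on a set $X$ is a collection of maps $U\to X$ (''plots''), $U$ ranging over open subsets of all $\mathbb{R}^n$, containing all constant maps, closed under precomposition with smooth maps, and satisfying the sheaf condition. The embedded wire diffeology $\mathcal{D}_T$ is the diffeology on $T$ generated by (i.e. the smallest diffeology containing) all maps $\gamma:\mathbb{R}\to T$ that are injective, continuous, and homeomorphisms onto their images. A map between diffeological spaces is smooth if it sends plots to plots. The functional diffeology on $C^\infty(T,T)$ is the coarsest diffeology such that the evaluation map $C^\infty(T,T)\times T\to T$ is smooth (with the product diffeology, the coarsest making projections smooth); $\operatorname{Aut}T\subseteq C^\infty(T,T)$ carries the subset diffeology. Equivalently, $P:U\to\operatorname{Aut}T$ is a plot iff $(u,x)\mapsto P(u)(x)$ is smooth $U\times T\to T$. *)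

From HB Require Import structures.
From mathcomp Require Import all_boot all_order all_algebra.
From mathcomp Require Import all_classical all_reals all_analysis.
Set Implicit Arguments.
Unset Strict Implicit.
Unset Printing Implicit Defensive.
Import Order.TTheory GRing.Theory Num.Theory.
Import numFieldNormedType.Exports.
Local Open Scope classical_set_scope.
Local Open Scope ring_scope.

Section TreeDiffeology.
Variables (R : realType) (A : finType).

Fixpoint iderive (m : nat) (V : normedModType R) (vs : seq 'rV[R]_m)
    (f : 'rV[R]_m -> V) : 'rV[R]_m -> V :=
  match vs with
  | [::] => f
  | v :: vs' => fun x => 'D_v (iderive vs' f) x
  end.

(* f is C^infty on the open set U: all iterated directional derivatives exist
   and are continuous at every point of U. Values of f outside U are irrelevant. *)
Definition smooth_on (m : nat) (V : normedModType R) (U : set 'rV[R]_m)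
    (f : 'rV[R]_m -> V) : Prop :=
  forall (vs : seq 'rV[R]_m) (x : 'rV[R]_m), U x ->
    (forall v : 'rV[R]_m, derivable (iderive vs f) x v) /\
    {for x, continuous (iderive vs f)}.

(* A point is (w, t): the root is ([::], 0); for w nonempty and 0 < t <= 1,
   (w, t) is the point at distance t from parent(w) on the edge [parent(w), w];
   (w, 1) is the vertex w. *)
Definition tpoint_ok (x : seq A * R) : bool :=
  if x.1 is [::] then x.2 == 0 else (0 < x.2) && (x.2 <= 1).

Definition TPoint := {x : seq A * R | tpoint_ok x}.

Lemma root_ok : tpoint_ok ([::], 0).
Proof. by rewrite /tpoint_ok /=. Qed.

Definition troot : TPoint := exist _ ([::], 0) root_ok.

Definition mkpt (x : seq A * R) : TPoint := insubd troot x.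

Definition parent (w : seq A) : seq A := take (size w).-1 w.

Definition vtx (u : seq A) : TPoint := mkpt (u, (if u is [::] then 0 else 1)).

Definition edge_pt (w : seq A) (s : R) : TPoint :=
  if s <= 0 then vtx (parent w) else mkpt (w, Num.min s 1).

(* CW (weak) topology: O is open iff its trace on each closed edge is open *)
Definition T_open (O : set TPoint) : Prop :=
  forall w : seq A, w != [::] ->
    exists W : set R, open W /\
      forall s : R, 0 <= s <= 1 -> (W s <-> O (edge_pt w s)).

Definition embedded_wire (g : R -> TPoint) : Prop :=
  injective g /\
  (forall O, T_open O -> open (g @^-1` O)) /\
  (forall V : set R, open V ->
     exists O, T_open O /\ g @` V = O `&` range g).

Definition param_family := forall n : nat, set 'rV[R]_n -> ('rV[R]_n -> TPoint) -> Prop.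

Definition is_diffeology (D : param_family) : Prop :=
  [/\ (* plots only depend on values on their domain *)
      (forall n U P P', D n U P -> (forall u, U u -> P u = P' u) -> D n U P'),
      (forall n U (x : TPoint), open U -> D n U (fun _ => x)),
      (forall n m U V P (F : 'rV[R]_m -> 'rV[R]_n),
          D n U P -> open V -> smooth_on V F -> (forall y, V y -> U (F y)) ->
          D m V (P \o F)) &
      (forall n U P, open U ->
          (forall u, U u -> exists V, [/\ open V, V u, V `<=` U & D n V P]) ->
          D n U P)].

Definition contains_wires (D : param_family) : Prop :=
  forall g, embedded_wire g -> D 1%N setT (fun v => g (v ord0 ord0)).

Definition DT_plot (n : nat) (U : set 'rV[R]_n) (P : 'rV[R]_n -> TPoint) : Prop :=
  open U /\ forall D, is_diffeology D -> contains_wires D -> D n U P.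

Definition adjacent (u v : seq A) : Prop :=
  (exists a, v = rcons u a) \/ (exists a, u = rcons v a).

Definition is_aut (g : seq A -> seq A) : Prop :=
  bijective g /\ g [::] = [::] /\ (forall u v, adjacent u v <-> adjacent (g u) (g v)).

(* the homeomorphism of the realization induced by g: it maps the edge
   [parent w, w] affinely onto [parent (g w), g w] *)
Definition realize (g : seq A -> seq A) (x : TPoint) : TPoint :=
  mkpt (g (sval x).1, (sval x).2).

(* P : R -> Aut T is a plot of the functional diffeology iff
   (u, x) |-> P(u)(x) is smooth R x T -> T, i.e. it sends every plot (f, Q)
   of the product diffeology on R x T to a plot of D_T *)
Definition aut_plot (P : R -> seq A -> seq A) : Prop :=
  forall (n : nat) (U : set 'rV[R]_n) (f : 'rV[R]_n -> R^o) (Q : 'rV[R]_n -> TPoint),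
    open U -> smooth_on U f -> DT_plot U Q ->
    DT_plot U (fun y => realize (P (f y)) (Q y)).

End TreeDiffeology.

(* The maps that are continuous for the CW topology of T form a diffeology containing every
   embedded wire, so every plot of D_T is continuous.  Feeding the identity of R and a
   constant vertex w into a plot P of Aut T therefore yields a continuous path u |-> P(u)(w)
   through vertices; the open star of a vertex separates it from all other vertices, so
   u |-> P(u)(w) is locally constant, hence constant on the connected line. *)
From HB Require Import structures.
From mathcomp Require Import all_boot all_order all_algebra.
From mathcomp Require Import all_classical all_reals all_analysis.
From mathcomp Require Import lra.
Import Order.TTheory GRing.Theory Num.Theory.
Import numFieldNormedType.Exports.
Local Open Scope classical_set_scope.
Local Open Scope ring_scope.
Set Implicit Arguments.
Unset Strict Implicit.

Lemma open_setI_preimage (S T : topologicalType) (V : set S) (W : set T) (F : S -> T) :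
  open V -> open W -> {in V, continuous F} -> open (V `&` F @^-1` W).
Proof.
move=> oV oW cF; rewrite openE => x [Vx Wx].
apply: filterI; first by move: oV; rewrite openE; apply.
by apply: (cF x); [rewrite inE | move: oW; rewrite openE; exact].
Qed.

Lemma connected_open_fibers_cst (S : topologicalType) (X : Type) (f : S -> X) :
  connected [set: S] -> (forall y, open (f @^-1` [set y])) ->
  forall u v, f u = f v.
Proof.
move=> cS ofib u v; pose B := f @^-1` [set f u].
have clB : closed B.
  have -> : B = ~` \bigcup_(y in [set y | y <> f u]) f @^-1` [set y].
    apply/seteqP; split => x /=; first by move=> Bx [y /= yfu fxy]; apply: yfu; rewrite -fxy.
    by move=> nx; apply: contrapT => nB; apply: nx; exists (f x).
  by apply: open_closedC; apply: bigcup_open => y _; exact: ofib.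
have : B = [set: S].
  by apply: cS; [exists u | by exists B; [exact: ofib | rewrite setTI] | by exists B; rewrite ?setTI].
by move=> BT; have : B v by rewrite BT.
Qed.

Lemma open_prop_and (S : topologicalType) (P : Prop) (Q : set S) :
  open Q -> open (fun s => P /\ Q s).
Proof.
move=> oQ; have [p|np] := pselect P.
  by rewrite (_ : (fun s => _) = Q) //; apply/seteqP; split => s /=; tauto.
rewrite (_ : (fun s => _) = set0); first exact: open0.
by apply/seteqP; split => s /=; tauto.
Qed.

Section LinearSmooth.
Variables (R : realType) (m : nat) (V : normedModType R).
Variable f : {linear 'rV[R]_m -> V}.
Hypothesis cf : continuous f.

Lemma iderive_linear_cst (vs : seq 'rV[R]_m) : vs != [::] ->
  exists c : V, iderive vs f = cst c.
Proof.
elim: vs => [//|v [|v' vs] IH] _.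
  exists (f v); apply/funext => x /=.
  by rewrite deriveE ?diff_lin //; exact: linear_differentiable.
have [c /= ->] := IH isT.
by exists 0; apply/funext => x /=; exact: derive_cst.
Qed.

Lemma smooth_on_linear : smooth_on setT f.
Proof.
move=> [|v vs] x _.
  split=> [w|]; last exact: cf.
  by apply: diff_derivable; exact: linear_differentiable.
have [c ->] := @iderive_linear_cst (v :: vs) isT.
by split; [move=> ?; exact: derivable_cst | exact: cst_continuous].
Qed.

End LinearSmooth.

Definition coord00 (R : realType) (v : 'rV[R]_1) : R^o := v ord0 ord0.

Lemma coord00_linear (R : realType) : linear (@coord00 R).
Proof. by move=> a x y; rewrite /coord00 !mxE. Qed.

HB.instance Definition _ (R : realType) :=
  GRing.isLinear.Build R 'rV[R]_1 R^o *:%R (@coord00 R) (@coord00_linear R).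

Lemma coord00_continuous (R : realType) : continuous (@coord00 R).
Proof. by move=> x; exact: coord_continuous. Qed.

Section ContinuousPlots.
Variables (R : realType) (A : finType).

Definition continuous_plot (n : nat) (U : set 'rV[R]_n) (Q : 'rV[R]_n -> TPoint R A) :=
  forall O, T_open O -> open (U `&` Q @^-1` O).

Lemma is_diffeology_continuous_plot : is_diffeology continuous_plot.
Proof.
split.
- move=> n U Q Q' cQ QQ' O oO.
  have -> : U `&` Q' @^-1` O = U `&` Q @^-1` O.
    by apply/seteqP; split => x [Ux Ox]; split; rewrite //= ?QQ' // -QQ'.
  exact: cQ.
- move=> n U x oU O _; have [Ox|nOx] := pselect (O x).
    by have -> : U `&` (fun=> x) @^-1` O = U by apply/seteqP; split => y //= [].
  by have -> : U `&` (fun=> x) @^-1` O = set0 by apply/seteqP; split => y //= [].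
- move=> n k U V Q F cQ oV sF VU O oO.
  have -> : V `&` (Q \o F) @^-1` O = V `&` F @^-1` (U `&` Q @^-1` O).
    by apply/seteqP; split => y /= [Vy Oy]; do ?split => //; [exact: VU | case: Oy].
  apply: open_setI_preimage => //; first exact: cQ.
  by move=> x /[!inE] Vx; have [] := sF [::] x Vx.
- move=> n U Q oU loc O oO; rewrite openE => x [Ux Ox].
  have [V [oV Vx VU cQ]] := loc x Ux.
  have := cQ O oO; rewrite openE => /(_ x (conj Vx Ox)).
  by apply: filterS => y [Vy Oy]; split => //; exact: VU.
Qed.

Lemma contains_wires_continuous_plot : contains_wires continuous_plot.
Proof.
move=> g [_ [cg _]] O oO; rewrite setTI.
by apply: (open_comp (f := @coord00 R)) (cg O oO) => x _; exact: coord00_continuous.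
Qed.

Lemma DT_plot_continuous n (U : set 'rV[R]_n) Q : DT_plot U Q -> continuous_plot U Q.
Proof.
by case=> _; apply; [exact: is_diffeology_continuous_plot | exact: contains_wires_continuous_plot].
Qed.

Lemma DT_plot_cst n (U : set 'rV[R]_n) (x : TPoint R A) : open U -> DT_plot U (fun=> x).
Proof. by move=> oU; split=> // D [_ Dcst _ _] _; exact: Dcst. Qed.

End ContinuousPlots.

Section VertexStar.
Variables (R : realType) (A : finType).
Implicit Types (u w : seq A) (x : TPoint R A).

Lemma mkptK (p : seq A * R) : tpoint_ok p -> sval (mkpt p) = p.
Proof. by move=> ok; rewrite /mkpt insubdK. Qed.

Lemma vtxE u : sval (@vtx R A u) = (u, if u is [::] then 0 else 1).
Proof. by rewrite /vtx mkptK //; case: u => [|a u]; rewrite /tpoint_ok //= ltr01 lexx. Qed.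

(* The points at distance < 1/2 from the non-root vertex [w]: on the edge to its parent
   (labelled by [w] itself) or on an edge to a child (labelled by a child of [w]). *)
Definition vertex_star w : set (TPoint R A) := fun x =>
  ((sval x).1 = w /\ 1/2 < (sval x).2) \/ (parent (sval x).1 = w /\ (sval x).2 < 1/2).

Lemma vertex_star_vtx w u : w != [::] -> vertex_star w (vtx R u) <-> u = w.
Proof.
move=> /eqP w0; rewrite /vertex_star vtxE; case: u => [|a u] /=.
  by split=> [[[e _]|[e _]]|e] //; case: w0; rewrite -e.
by split=> [[[e _]|[_ lt1]] //|->]; [by exfalso; clear -lt1; lra | left; split=> //; lra].
Qed.

Lemma T_open_vertex_star w : w != [::] -> T_open (vertex_star w).
Proof.
have half_gt0 : 0 < 1 / 2 :> R by lra.
move=> w0 v v0.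
exists (fun s : R => (v = w /\ 1/2 < s) \/ (parent v = w /\ s < 1/2)); split.
  by apply: openU; apply: open_prop_and; [exact: open_gt | exact: open_lt].
move=> s /andP[s0 s1]; rewrite /edge_pt; case: ifP => sle0.
  have -> : s = 0 by apply/eqP; rewrite eq_le sle0.
  rewrite vertex_star_vtx //; split=> [[[_ lt0]|[]] //|->]; last by right.
  by rewrite ltNge (ltW half_gt0) in lt0.
rewrite /vertex_star mkptK (min_l s1) //.
by case: v v0 => [|a v] //= _; rewrite /tpoint_ok /= s1 andbT ltNge sle0.
Qed.

Lemma realize_vtx (g : seq A -> seq A) w :
  w != [::] -> g w != [::] -> realize g (@vtx R A w) = vtx R (g w).
Proof.
by case: w => [|a w] // _; rewrite /realize vtxE /=; case: (g (a :: w)).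
Qed.

End VertexStar.

Lemma aut_nonroot (A : finType) (g : seq A -> seq A) w :
  is_aut g -> w != [::] -> g w != [::].
Proof.
move=> [[ginv gK _] [g0 _]] /eqP w0; apply/eqP => gw0; apply: w0.
by rewrite -(gK w) gw0 -g0 gK.
Qed.

Lemma aut_plot_vertex_fiber_open (R : realType) (A : finType) (P : R -> seq A -> seq A) :
  (forall u, is_aut (P u)) -> aut_plot P ->
  forall w w1, w != [::] -> open [set u | P u w = w1].
Proof.
move=> Paut Pplot w w1 w0.
have [w1_0|w1_0] := eqVneq w1 [::].
  rewrite (_ : [set u | _] = set0); first exact: open0.
  by apply/seteqP; split=> u //= Puw; move: (aut_nonroot (Paut u) w0); rewrite Puw w1_0.
have cplot := DT_plot_continuous (Pplot 1%N setT (@coord00 R) (fun=> vtx R w) openT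
  (smooth_on_linear (@coord00_continuous R)) (DT_plot_cst _ openT)).
have := cplot _ (T_open_vertex_star R w1_0).
rewrite setTI; set S := _ @^-1` _ => oS.
have -> : [set u | P u w = w1] = (fun u : R => u *: (const_mx 1 : 'rV[R]_1)) @^-1` S.
  apply/seteqP; split=> u; rewrite /S /preimage /coord00 /= !mxE mulr1;
    rewrite (realize_vtx R w0 (aut_nonroot (Paut u) w0)) => ?; exact/(vertex_star_vtx R _ w1_0).
by apply: open_comp oS => x _; exact: scalel_continuous.
Qed.

Theorem mainTheorem5 (R : realType) (A : finType) (hA : (1 < #|A|)%N)
    (P : R -> seq A -> seq A)
    (hPaut : forall u : R, is_aut (P u))
    (hPplot : aut_plot P) :
  forall u v : R, P u = P v.
Proof.
move=> u v; apply/funext => w.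
have [->|w0] := eqVneq w [::]; first by have [_ [-> _]] := hPaut u; have [_ [-> _]] := hPaut v.
have connR : connected [set: R] by apply/connected_intervalP.
apply: (connected_open_fibers_cst (f := fun u => P u w)) connR _ u v => w1.
exact: aut_plot_vertex_fiber_open.
Qed.
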